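(* Let $G(\lambda)\in\mathbb F(\lambda)^{p\times m}$, let $L(\lambda)$ be a strong block minimal bases linearization of $G(\lambda)$ as in the context, with transfer function matrix $\widehat G(\lambda)=\begin{bmatrix} M(\lambda)+\widehat K_2^TC(\lambda I_n-A)^{-1}B\widehat K_1 & K_2(\lambda)^T\\ K_1(\lambda) & 0\end{bmatrix}$. (a) Every right minimal basis of $\widehat G(\lambda)$ has the form $\left\{\begin{bmatrix}N_1(\lambda)^T\\ -\widehat N_2(\lambda)M(\lambda)N_1(\lambda)^T\end{bmatrix}h_j(\lambda)\right\}_{j=1}^l$ for some right minimal basis $\{h_1,\dots,h_l\}$ of $G(\lambda)$. (b) Every left minimal basis of $\widehat G(\lambda)$ has the form $\left\{\begin{bmatrix}N_2(\lambda)^T\\ -\widehat N_1(\lambda)M(\lambda)^TN_2(\lambda)^T\end{bmatrix}j_i(\lambda)\right\}_{i=1}^q$ for some left minimal basis $\{j_1,\dots,j_q\}$ of $G(\lambda)$.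
   Context: $\mathbb F$ is an arbitrary field. A polynomial matrix $K\in\mathbb F[\lambda]^{a\times b}$, $a<b$, is a minimal basis if its rows form a minimal basis (polynomial basis of least total degree) of the subspace they span; $K\in\mathbb F[\lambda]^{a_1\times b}$, $N\in\mathbb F[\lambda]^{a_2\times b}$ are dual minimal bases if both are minimal bases, $a_1+a_2=b$ and $KN^T=0$. Strong block minimal bases linearization: write $G=D+C(\lambda I_n-A)^{-1}B$ with $D$ the polynomial part, $\deg D>1$, and $C(\lambda I_n-A)^{-1}B$ a minimal order state-space realization of the strictly proper part. Let $K_1\in\mathbb F[\lambda]^{\widehat m\times(m+\widehat m)}$, $K_2\in\mathbb F[\lambda]^{\widehat p\times(p+\widehat p)}$ be minimal bases with all row degrees $1$, $N_1\in\mathbb F[\lambda]^{m\times(m+\widehat m)}$, $N_2\in\mathbb F[\lambda]^{p\times(p+\widehat p)}$ minimal bases dual to $K_1,K_2$, each with all row degrees equal, and $M(\lambda)$ a $(p+\widehat p)\times(m+\widehat m)$ pencil with $D=N_2MN_1^T$ and $\deg D=\deg N_1+\deg N_2+1$. Let $\widehat K_1\in\mathbb F^{m\times(m+\widehat m)}$, $\widehat K_2\in\mathbb F^{p\times(p+\widehat p)}$, $\widehat N_1\in\mathbb F[\lambda]^{\widehat m\times(m+\widehat m)}$, $\widehat N_2\in\mathbb F[\lambda]^{\widehat p\times(p+\widehat p)}$ be such that $\begin{bmatrix}K_i\\ \widehat K_i\end{bmatrix}$ is unimodular with inverse $\begin{bmatrix}\widehat N_i^T & N_i^T\end{bmatrix}$,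 $i=1,2$. For nonsingular $T,S$, $L(\lambda)=\begin{bmatrix}T(\lambda I_n-A)S & TB\widehat K_1 & 0\\ -\widehat K_2^TCS & M(\lambda) & K_2(\lambda)^T\\ 0 & K_1(\lambda) & 0\end{bmatrix}$. A right (left) minimal basis of a rational matrix $G$ is a set of polynomial vectors forming a minimal basis of $\mathcal N_r(G)=\{x:Gx=0\}$ ($\mathcal N_\ell(G)=\{x:x^TG=0\}$). *)

From HB Require Import structures.
From mathcomp Require Import all_boot all_order all_algebra.
Set Implicit Arguments. Unset Strict Implicit. Unset Printing Implicit Defensive.
Import Order.TTheory GRing.Theory Num.Theory.
Local Open Scope ring_scope.

Definition RF (F : fieldType) := {fraction {poly F}}.

Definition pmx (F : fieldType) m n (P : 'M[{poly F}]_(m, n)) : 'M[RF F]_(m, n) :=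
  map_mx (@FracField.tofrac _) P.

Definition cpmx (F : fieldType) m n (A : 'M[F]_(m, n)) : 'M[{poly F}]_(m, n) :=
  map_mx (fun a => a%:P) A.

Definition cmx (F : fieldType) m n (A : 'M[F]_(m, n)) : 'M[RF F]_(m, n) :=
  pmx (cpmx A).

Definition lam (F : fieldType) : RF F := FracField.tofrac ('X : {poly F}).

Definition ss_transfer (F : fieldType) p n m
  (C : 'M[F]_(p, n)) (A : 'M[F]_n) (B : 'M[F]_(n, m)) : 'M[RF F]_(p, m) :=
  cmx C *m invmx (lam F *: 1%:M - cmx A) *m cmx B.

Definition minimal_realization (F : fieldType) p n m
  (C : 'M[F]_(p, n)) (A : 'M[F]_n) (B : 'M[F]_(n, m)) : Prop :=
  forall n' (C' : 'M[F]_(p, n')) (A' : 'M[F]_n') (B' : 'M[F]_(n', m)),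
    ss_transfer C' A' B' = ss_transfer C A B -> (n <= n')%N.

Definition rdeg (F : fieldType) m n (P : 'M[{poly F}]_(m, n)) (i : 'I_m) : nat :=
  \max_(j < n) (size (P i j)).-1.
Definition cdeg (F : fieldType) m n (P : 'M[{poly F}]_(m, n)) (j : 'I_n) : nat :=
  \max_(i < m) (size (P i j)).-1.
Definition mdeg (F : fieldType) m n (P : 'M[{poly F}]_(m, n)) : nat :=
  \max_(i < m) rdeg P i.
Definition tdeg (F : fieldType) m n (P : 'M[{poly F}]_(m, n)) : nat :=
  \sum_(j < n) cdeg P j.

Definition poly_basis_of (F : fieldType) n (S : 'cV[RF F]_n -> Prop) l
  (H : 'M[{poly F}]_(n, l)) : Prop :=
  [/\ \rank (pmx H) = l,
      (forall j : 'I_l, S (col j (pmx H))) &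
      (forall x, S x -> exists c : 'cV[RF F]_l, x = pmx H *m c)].

Definition minimal_basis_of (F : fieldType) n (S : 'cV[RF F]_n -> Prop) l
  (H : 'M[{poly F}]_(n, l)) : Prop :=
  poly_basis_of S H /\
  forall l' (H' : 'M[{poly F}]_(n, l')), poly_basis_of S H' -> (tdeg H <= tdeg H')%N.

Definition rnull (F : fieldType) p m (G : 'M[RF F]_(p, m)) (x : 'cV[RF F]_m) : Prop :=
  G *m x = 0.
Definition lnull (F : fieldType) p m (G : 'M[RF F]_(p, m)) (x : 'cV[RF F]_p) : Prop :=
  x^T *m G = 0.

Definition right_minimal_basis (F : fieldType) p m (G : 'M[RF F]_(p, m)) l
  (H : 'M[{poly F}]_(m, l)) : Prop := minimal_basis_of (rnull G) H.
Definition left_minimal_basis (F : fieldType) p m (G : 'M[RF F]_(p, m)) q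
  (J : 'M[{poly F}]_(p, q)) : Prop := minimal_basis_of (lnull G) J.

Definition row_span (F : fieldType) a b (K : 'M[{poly F}]_(a, b)) (x : 'cV[RF F]_b) : Prop :=
  exists c : 'cV[RF F]_a, x = (pmx K)^T *m c.
Definition minimal_basis (F : fieldType) a b (K : 'M[{poly F}]_(a, b)) : Prop :=
  (a < b)%N /\ minimal_basis_of (row_span K) K^T.

Definition dual_minimal_bases (F : fieldType) a1 a2 b
  (K : 'M[{poly F}]_(a1, b)) (N : 'M[{poly F}]_(a2, b)) : Prop :=
  [/\ minimal_basis K, minimal_basis N, (a1 + a2)%N = b & K *m N^T = 0].

(* Put X = [N1^T; -N2h M N1^T] and Y = [K1h 0], so that Y X = 1.  The unimodularity of
   [K_i; Kh_i] shows that the right null space of Ghat is the image under X of the right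
   null space of G, on which X shifts degrees uniformly: deg (X h) = deg h + deg N1.
   The lower bound is the predictable degree property of the minimal basis N1, all of whose
   rows have degree deg N1.  For the upper bound, G h = 0 makes the strictly proper part
   W h = - D h polynomial, hence of degree at most deg h, and K2, a minimal basis with row
   degrees 1, is row reduced.  So X maps polynomial bases of ker G onto polynomial bases
   of ker Ghat, raising total degrees by the same amount, and minimal bases correspond.
   Part (b) is part (a) for the transposed linearization. *)

From HB Require Import structures.
From mathcomp Require Import all_boot all_order all_algebra.
From mathcomp Require Import zify ring.
Import GRing.Theory.
Local Open Scope ring_scope.

Set Implicit Arguments.
Unset Strict Implicit.

Lemma colM (R : pzSemiRingType) m n r (A : 'M[R]_(m, n)) (B : 'M[R]_(n, r)) j :
  col j (A *m B) = A *m col j B.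
Proof. by rewrite !colE mulmxA. Qed.

Lemma col_matrixP (R : Type) m n (A B : 'M[R]_(m, n)) :
  (forall j, col j A = col j B) -> A = B.
Proof. by move=> eqAB; apply: trmx_inj; apply/row_matrixP => j; rewrite -!tr_col eqAB. Qed.

Lemma mxrank_leq_col_span (R : fieldType) m n1 n2 (A : 'M[R]_(m, n1)) (B : 'M[R]_(m, n2)) :
  (forall j, exists c : 'cV_n2, col j A = B *m c) -> (\rank A <= \rank B)%N.
Proof.
move=> spanA; have [c Ac] := fin_all_exists spanA.
have -> : A = B *m \matrix_(i, j) c j i 0.
  by apply: col_matrixP => j; rewrite colM Ac; congr (_ *m _); apply/colP => i; rewrite !mxE.
exact: mxrankM_maxl.
Qed.

Lemma row_free_row_neq0 (R : fieldType) m n (A : 'M[R]_(m, n)) i :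
  row_free A -> row i A != 0.
Proof.
move=> freeA; rewrite rowE mulmx_free_eq0 //; apply/eqP => /matrixP/(_ 0 i)/eqP.
by rewrite !mxE !eqxx oner_eq0.
Qed.

Lemma unitmx_with_row (R : fieldType) a (c : 'rV[R]_a) i :
  c 0 i != 0 -> exists2 E : 'M[R]_a, E \in unitmx & row i E = c.
Proof.
(* E := 1 + e_i^T (c - e_i) has inverse 1 - (c_i)^-1 e_i^T (c - e_i). *)
move=> ci; set w := c - delta_mx 0 i; set u := (delta_mx 0 i)^T *m w.
have wu : w *m (delta_mx 0 i)^T = (c 0 i - 1)%:M.
  apply/matrixP => x y; rewrite (ord1 x) (ord1 y) !mxE (bigD1 i) //= big1 => [|k /negPf nki].
    by rewrite !mxE !eqxx /= mulr1 addr0 mulr1n.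
  by rewrite !mxE nki mulr0.
have uu : u *m u = (c 0 i - 1) *: u.
  by rewrite /u mulmxA -(mulmxA _ w) wu mul_mx_scalar scalemxAl.
exists (1%:M + u).
  apply: (proj1 (@mulmx1_unit _ _ _ (1%:M - (c 0 i)^-1 *: u) _)).
  rewrite mulmxDl mul1mx mulmxBr mulmx1 -scalemxAr uu scalerA.
  rewrite -{2}[u]scale1r -scalerBl -addrA -scaleNr -scalerDl.
  suff -> : - (c 0 i)^-1 + (1 - (c 0 i)^-1 * (c 0 i - 1)) = 0 by rewrite scale0r addr0.
  by field.
apply/rowP => j; rewrite !mxE big_ord1 !mxE !eqxx /= mul1r.
by rewrite eq_sym addrC subrK.
Qed.

Lemma col_row_mx_eq1 (R : pzRingType) m1 m2 n (A : 'M[R]_(m1, n)) (B : 'M[R]_(m2, n))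
  (C : 'M[R]_(n, m1)) (D : 'M[R]_(n, m2)) :
  col_mx A B *m row_mx C D = 1%:M ->
  [/\ A *m C = 1%:M, A *m D = 0, B *m C = 0 & B *m D = 1%:M].
Proof. by rewrite mul_col_row scalar_mx_block => /eq_block_mx. Qed.

Section PolyMatrixDegree.
Variable F : fieldType.
Local Notation P := {poly F}.

Definition mxdeg_le m n (A : 'M[P]_(m, n)) d : Prop :=
  forall i j, (size (A i j) <= d.+1)%N.

Definition vdeg m (v : 'cV[P]_m) : nat := cdeg v 0.

Lemma predn_leqS k d : (k.-1 <= d)%N = (k <= d.+1)%N.
Proof. by case: k. Qed.

Lemma vdeg_leP m (v : 'cV[P]_m) d : (vdeg v <= d)%N <-> mxdeg_le v d.
Proof.
split=> [/bigmax_leqP hv i j | hv]; last by apply/bigmax_leqP => i _; rewrite predn_leqS.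
by rewrite (ord1 j) -predn_leqS; apply: hv.
Qed.

Lemma mxdeg_le_vdeg m (v : 'cV[P]_m) : mxdeg_le v (vdeg v).
Proof. exact/vdeg_leP. Qed.

Lemma rdeg_leP m n (A : 'M[P]_(m, n)) i d :
  (rdeg A i <= d)%N <-> forall j, (size (A i j) <= d.+1)%N.
Proof.
split=> [/bigmax_leqP hA j | hA]; last by apply/bigmax_leqP => j _; rewrite predn_leqS.
by rewrite -predn_leqS; apply: hA.
Qed.

Lemma mxdeg_le_rdeg m n (A : 'M[P]_(m, n)) d :
  (forall i, rdeg A i <= d)%N -> mxdeg_le A d.
Proof. by move=> hA i; apply/rdeg_leP. Qed.

Lemma mxdeg_le_widen m n (A : 'M[P]_(m, n)) d e :
  (d <= e)%N -> mxdeg_le A d -> mxdeg_le A e.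
Proof. by move=> le_de hA i j; apply: leq_trans (hA i j) _. Qed.

Lemma mxdeg_leD m n (A B : 'M[P]_(m, n)) d :
  mxdeg_le A d -> mxdeg_le B d -> mxdeg_le (A + B) d.
Proof.
move=> hA hB i j; rewrite mxE; apply: leq_trans (size_polyD _ _) _.
by rewrite geq_max hA hB.
Qed.

Lemma mxdeg_leN m n (A : 'M[P]_(m, n)) d : mxdeg_le A d -> mxdeg_le (- A) d.
Proof. by move=> hA i j; rewrite mxE size_polyN. Qed.

Lemma mxdeg_le_tr m n (A : 'M[P]_(m, n)) d : mxdeg_le A d -> mxdeg_le A^T d.
Proof. by move=> hA i j; rewrite mxE. Qed.

Lemma mxdeg_le_cpmx m n (E : 'M[F]_(m, n)) : mxdeg_le (cpmx E) 0.
Proof. by move=> i j; rewrite mxE size_polyC leq_b1. Qed.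

Lemma size_mul_deg_le (p q : P) d e :
  (size p <= d.+1)%N -> (size q <= e.+1)%N -> (size (p * q)%R <= (d + e).+1)%N.
Proof. by move=> hp hq; apply: leq_trans (size_polyMleq p q) _; lia. Qed.

Lemma mxdeg_leM m n r (A : 'M[P]_(m, n)) (B : 'M[P]_(n, r)) d e :
  mxdeg_le A d -> mxdeg_le B e -> mxdeg_le (A *m B) (d + e).
Proof.
move=> hA hB i j; rewrite mxE; apply: leq_trans (size_sum _ _ _) _.
by apply/bigmax_leqP => k _; apply: size_mul_deg_le.
Qed.

Definition coefmx k m n (A : 'M[P]_(m, n)) : 'M[F]_(m, n) :=
  map_mx (fun p : P => p`_k) A.

Lemma coefM_deg_le (p q : P) d e :
  (size p <= d.+1)%N -> (size q <= e.+1)%N -> (p * q)`_(d + e) = p`_d * q`_e.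
Proof.
move=> hp hq; rewrite coefM (bigD1 (Ordinal (ltn_addr e (ltnSn d)))) //= addKn.
rewrite big1 ?addr0 // => k /eqP neq_kd.
have [lt_kd | lt_dk | eq_kd] := ltngtP k d; last by case: neq_kd; apply: val_inj.
- by rewrite [q`_ _]nth_default ?mulr0 //; apply: leq_trans hq _; rewrite ltn_subRL ltn_add2r.
- by rewrite [p`_ _]nth_default ?mul0r //; apply: leq_trans hp lt_dk.
Qed.

Lemma coefmxM m n r (A : 'M[P]_(m, n)) (B : 'M[P]_(n, r)) d e :
  mxdeg_le A d -> mxdeg_le B e -> coefmx (d + e) (A *m B) = coefmx d A *m coefmx e B.
Proof.
move=> hA hB; apply/matrixP => i j; rewrite !mxE coef_sum.
by apply: eq_bigr => k _; rewrite !mxE coefM_deg_le.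
Qed.

Lemma coefmx0_cpmx m n (E : 'M[F]_(m, n)) : coefmx 0 (cpmx E) = E.
Proof. by apply/matrixP => i j; rewrite !mxE coefC. Qed.

Lemma coefmx_tr k m n (A : 'M[P]_(m, n)) : coefmx k A^T = (coefmx k A)^T.
Proof. by rewrite /coefmx map_trmx. Qed.

Lemma size_poly_leq_top (p : P) d : (size p <= d.+1)%N -> p`_d = 0 -> (size p <= d)%N.
Proof.
move=> le_pd pd0; apply/leq_sizeP => k; rewrite leq_eqVlt => /predU1P[<- // | lt_dk].
exact: nth_default (leq_trans le_pd lt_dk).
Qed.

Lemma coefmx_vdeg_neq0 m (v : 'cV[P]_m) : v != 0 -> coefmx (vdeg v) v != 0.
Proof.
apply: contraNneq => top0; apply/eqP.
have le_v i : (size (v i ord0) <= vdeg v)%N.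
  apply: size_poly_leq_top (mxdeg_le_vdeg v i 0) _.
  by have /matrixP/(_ i 0) := top0; rewrite !mxE.
case def_d: (vdeg v) le_v => [|d] le_v.
  apply/matrixP => i j; rewrite (ord1 j) mxE; apply/eqP.
  by rewrite -size_poly_eq0 -leqn0 le_v.
have : (vdeg v <= d)%N by apply/vdeg_leP => i j; rewrite (ord1 j) le_v.
by rewrite def_d ltnn.
Qed.

Lemma vdeg_coefmx m (v : 'cV[P]_m) k : coefmx k v != 0 -> (k <= vdeg v)%N.
Proof.
rewrite leqNgt; apply: contraNN => lt_vk; apply/eqP/matrixP => i j; rewrite !mxE.
by rewrite nth_default //; apply: leq_trans (mxdeg_le_vdeg v i j) lt_vk.
Qed.

Lemma vdeg_col_mx m1 m2 (a : 'cV[P]_m1) (b : 'cV[P]_m2) :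
  vdeg (col_mx a b) = maxn (vdeg a) (vdeg b).
Proof.
rewrite /vdeg /cdeg big_split_ord /=.
by congr maxn; apply: eq_bigr => i _; rewrite ?col_mxEu ?col_mxEd.
Qed.

Lemma vdeg0 m : vdeg (0 : 'cV[P]_m) = 0%N.
Proof. by apply/eqP; rewrite -leqn0; apply/vdeg_leP => i j; rewrite mxE size_poly0. Qed.

Lemma rdeg_eq_mdeg m n (A : 'M[P]_(m, n)) i :
  (forall i j, rdeg A i = rdeg A j) -> rdeg A i = mdeg A.
Proof.
move=> eqA; apply/eqP; rewrite eqn_leq (@leq_bigmax _ (rdeg A) i) /=.
by apply/bigmax_leqP => j _; rewrite (eqA j i).
Qed.

Lemma cdeg_col m n (A : 'M[P]_(m, n)) j : cdeg A j = vdeg (col j A).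
Proof. by rewrite /vdeg /cdeg; under [RHS]eq_bigr => i _ do rewrite mxE. Qed.

Lemma tdeg_tr m n (A : 'M[P]_(m, n)) : tdeg A^T = (\sum_i rdeg A i)%N.
Proof. by apply: eq_bigr => j _; apply: eq_bigr => k _; rewrite mxE. Qed.

End PolyMatrixDegree.

Section Embeddings.
Variable F : fieldType.
Local Notation P := {poly F}.

Lemma pmxM m n r (A : 'M[P]_(m, n)) (B : 'M[P]_(n, r)) : pmx (A *m B) = pmx A *m pmx B.
Proof. exact: map_mxM. Qed.
Lemma pmxD m n (A B : 'M[P]_(m, n)) : pmx (A + B) = pmx A + pmx B.
Proof. exact: map_mxD. Qed.
Lemma pmxN m n (A : 'M[P]_(m, n)) : pmx (- A) = - pmx A.
Proof. exact: map_mxN. Qed.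
Lemma pmx0 m n : pmx (0 : 'M[P]_(m, n)) = 0.
Proof. exact: map_mx0. Qed.
Lemma pmx1 n : pmx (1%:M : 'M[P]_n) = 1%:M.
Proof. exact: map_mx1. Qed.
Lemma pmxT m n (A : 'M[P]_(m, n)) : pmx A^T = (pmx A)^T.
Proof. by rewrite /pmx map_trmx. Qed.
Lemma pmx_col_mx m1 m2 n (A : 'M[P]_(m1, n)) (B : 'M[P]_(m2, n)) :
  pmx (col_mx A B) = col_mx (pmx A) (pmx B).
Proof. exact: map_col_mx. Qed.
Lemma pmx_row_mx m n1 n2 (A : 'M[P]_(m, n1)) (B : 'M[P]_(m, n2)) :
  pmx (row_mx A B) = row_mx (pmx A) (pmx B).
Proof. exact: map_row_mx. Qed.
Lemma col_pmx m n (A : 'M[P]_(m, n)) j : col j (pmx A) = pmx (col j A).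
Proof. by apply/matrixP => i k; rewrite !mxE. Qed.

Lemma pmx_inj m n : injective (@pmx F m n).
Proof.
move=> A B /matrixP eqAB; apply/matrixP => i j.
by have /eqP := eqAB i j; rewrite !mxE tofrac_eq => /eqP.
Qed.

Lemma cpmxM m n r (A : 'M[F]_(m, n)) (B : 'M[F]_(n, r)) : cpmx (A *m B) = cpmx A *m cpmx B.
Proof. exact: map_mxM. Qed.
Lemma cpmxT m n (A : 'M[F]_(m, n)) : cpmx A^T = (cpmx A)^T.
Proof. by rewrite /cpmx map_trmx. Qed.
Lemma cmxM m n r (A : 'M[F]_(m, n)) (B : 'M[F]_(n, r)) : cmx (A *m B) = cmx A *m cmx B.
Proof. by rewrite /cmx cpmxM pmxM. Qed.
Lemma cmxT m n (A : 'M[F]_(m, n)) : cmx A^T = (cmx A)^T.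
Proof. by rewrite /cmx cpmxT pmxT. Qed.
Lemma cmx1 n : cmx (1%:M : 'M[F]_n) = 1%:M.
Proof. by rewrite /cmx /cpmx map_mx1 pmx1. Qed.

Lemma cmx_unit n (E : 'M[F]_n) : E \in unitmx -> cmx E \in unitmx.
Proof.
move=> uE; have EE' : cmx E *m cmx (invmx E) = 1%:M by rewrite -cmxM mulmxV // cmx1.
exact: (proj1 (mulmx1_unit EE')).
Qed.

End Embeddings.

Section PolynomialBases.
Variable F : fieldType.
Local Notation P := {poly F}.

Lemma poly_basis_row_free n (S : 'cV[RF F]_n -> Prop) l (H : 'M[P]_(n, l)) :
  poly_basis_of S H -> row_free (pmx H)^T.
Proof. by case=> rkH _ _; rewrite /row_free mxrank_tr rkH. Qed.

Lemma poly_basis_col_neq0 n (S : 'cV[RF F]_n -> Prop) l (H : 'M[P]_(n, l)) j :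
  poly_basis_of S H -> col j H != 0.
Proof.
move/poly_basis_row_free/(row_free_row_neq0 j); apply: contraNneq => Hj0.
by rewrite -tr_col col_pmx Hj0 pmx0 trmx0.
Qed.

Lemma poly_basis_of_size n (S : 'cV[RF F]_n -> Prop) l l'
  (H : 'M[P]_(n, l)) (H' : 'M[P]_(n, l')) :
  poly_basis_of S H -> poly_basis_of S H' -> l = l'.
Proof.
have le_size k k' (K : 'M[P]_(n, k)) (K' : 'M[P]_(n, k')) :
    poly_basis_of S K -> poly_basis_of S K' -> (k <= k')%N.
  move=> [rkK memK _] [rkK' _ spanK'].
  rewrite -[X in (X <= _)%N]rkK -[X in (_ <= X)%N]rkK'.
  by apply: mxrank_leq_col_span => j; exact: spanK' _ (memK j).
by move=> bH bH'; apply/eqP; rewrite eqn_leq (le_size _ _ _ _ bH bH') (le_size _ _ _ _ bH' bH).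
Qed.

Lemma minimal_basis_of_ext n (S S' : 'cV[RF F]_n -> Prop) l (H : 'M[P]_(n, l)) :
  (forall x, S x <-> S' x) -> minimal_basis_of S H -> minimal_basis_of S' H.
Proof.
have basis_ext T T' k (H' : 'M[P]_(n, k)) :
    (forall x, T x <-> T' x) -> poly_basis_of T H' -> poly_basis_of T' H'.
  by move=> eqT [rk mem span]; split=> // [j | x /eqT/span //]; apply/eqT/mem.
move=> eqS [basisH minH]; split; first exact: basis_ext basisH.
by move=> l' H' /basis_ext basisH'; apply/minH/basisH' => x; split => /eqS.
Qed.

Lemma lnull_rnull p m (G : 'M[RF F]_(p, m)) x : lnull G x <-> rnull G^T x.
Proof.
by split=> eq0; [rewrite /rnull -[x]trmxK -trmx_mul eq0 | rewrite /lnull -[G]trmxK -trmx_mul eq0];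
  rewrite trmx0.
Qed.

End PolynomialBases.

Section RowReducedMinimalBases.
Variable F : fieldType.
Local Notation P := {poly F}.

Lemma minimal_basis_row_free a b (K : 'M[P]_(a, b)) :
  minimal_basis K -> row_free (pmx K).
Proof. by case=> _ [/poly_basis_row_free]; rewrite pmxT trmxK. Qed.

Lemma poly_basis_row_span_unitmx a b (K : 'M[P]_(a, b)) (E : 'M[F]_a) :
  minimal_basis K -> E \in unitmx -> poly_basis_of (row_span K) (cpmx E *m K)^T.
Proof.
move=> mK uE; have fullE : row_full (cmx E) by rewrite row_full_unit cmx_unit.
have pmxEK : pmx (cpmx E *m K) = cmx E *m pmx K by rewrite pmxM.
split.
- rewrite pmxT mxrank_tr pmxEK (eqmxMfull _ fullE).
  exact/eqP/minimal_basis_row_free.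
- by move=> j; exists (col j (cmx E)^T); rewrite pmxT pmxEK trmx_mul !colE mulmxA.
- move=> _ [c ->]; exists ((cmx (invmx E))^T *m c).
  rewrite pmxT pmxEK trmx_mul -(mulmxA (pmx K)^T) [(cmx E)^T *m _]mulmxA.
  by rewrite -trmx_mul -cmxM mulVmx // cmx1 trmx1 mul1mx.
Qed.

(* Minimality forces the highest-degree coefficient matrix of K to have full row
   rank: a dependency c among its rows yields a constant unimodular E with
   row i E = c, and E K spans the same space with row i of smaller degree
   (or zero, when d = 0). *)
Lemma minimal_basis_coefmx_row_free a b (K : 'M[P]_(a, b)) d :
  minimal_basis K -> (forall i, rdeg K i = d) -> row_free (coefmx d K).
Proof.
move=> mK degK; apply: inj_row_free => c cK0; apply/eqP/negPn/negP.
case/matrix0Pn => i0 [i]; rewrite (ord1 i0) => {i0} ci.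
have [E uE rowE] := unitmx_with_row ci.
have basisK' := poly_basis_row_span_unitmx mK uE.
set K' := cpmx E *m K in basisK' *.
have leK : mxdeg_le K d by apply: mxdeg_le_rdeg => j; rewrite degK.
have leK' : mxdeg_le K' d := mxdeg_leM (mxdeg_le_cpmx E) leK.
have le_rowK' j : (size (K' i j) <= d)%N.
  apply: size_poly_leq_top (leK' i j) _.
  have : row i (coefmx d K') = 0.
    by rewrite (coefmxM (mxdeg_le_cpmx E) leK) coefmx0_cpmx row_mul rowE.
  by move/matrixP/(_ 0 j); rewrite !mxE.
have := mK.2.2 _ _ basisK'; rewrite !tdeg_tr (bigD1 i) //= [X in (_ <= X)%N](bigD1 i) //=.
have le_rest : (\sum_(j < a | j != i) rdeg K' j <= \sum_(j < a | j != i) rdeg K j)%N.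
  by apply: leq_sum => j _; rewrite degK; apply/rdeg_leP; apply: leK'.
case: d degK leK leK' le_rowK' cK0 => [|d] degK _ _ le_rowK' _.
  move=> _; have := poly_basis_row_free basisK'; clearbody K'; rewrite pmxT trmxK.
  move/(row_free_row_neq0 i)/negP; apply.
  apply/eqP/rowP => j; move: (le_rowK' j); rewrite leqn0 size_poly_eq0 => /eqP K'ij.
  by rewrite !mxE K'ij tofrac0.
have le_iK' : (rdeg K' i <= d)%N by apply/rdeg_leP.
by move/leq_trans/(_ (leq_add le_iK' le_rest)); rewrite degK leq_add2r ltnn.
Qed.

Lemma vdeg_minimal_basis_mul a b (K : 'M[P]_(a, b)) d (v : 'cV[P]_a) :
  minimal_basis K -> (forall i, rdeg K i = d) -> v != 0 ->
  (vdeg v + d <= vdeg (K^T *m v))%N.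
Proof.
move=> mK degK nz_v; apply: vdeg_coefmx.
have leK : mxdeg_le K^T d by apply/mxdeg_le_tr/mxdeg_le_rdeg => j; rewrite degK.
rewrite addnC (coefmxM leK (mxdeg_le_vdeg v)) coefmx_tr -trmx_eq0 trmx_mul trmxK.
by rewrite mulmx_free_eq0 ?trmx_eq0 ?coefmx_vdeg_neq0 ?(minimal_basis_coefmx_row_free mK).
Qed.

End RowReducedMinimalBases.

Section StateSpaceTransfer.
Variable F : fieldType.
Local Notation P := {poly F}.

Lemma size_det_deg_le1 k (Q : 'M[P]_k) : mxdeg_le Q 1 -> (size (\det Q) <= k.+1)%N.
Proof.
move=> leQ; apply: leq_trans (size_sum _ _ _) _; apply/bigmax_leqP => s _.
rewrite size_Msign; apply: leq_trans (size_poly_prod_leq _ _) _.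
rewrite leq_subLR cardT size_enum_ord addnS ltnS.
apply: (@leq_trans (\sum_(i < k) 2)%N); first by apply: leq_sum => i _; apply: leQ.
by rewrite sum_nat_const card_ord muln2 -addnn.
Qed.

Lemma adj_deg_le k (Q : 'M[P]_k) : mxdeg_le Q 1 -> mxdeg_le (\adj Q) k.-1.
Proof.
case: k Q => [|k] Q leQ i j; first by case: i.
by rewrite mxE /cofactor size_Msign; apply: size_det_deg_le1 => x y; rewrite !mxE.
Qed.

Lemma char_poly_mx_deg_le1 n (A : 'M[F]_n) : mxdeg_le (char_poly_mx A) 1.
Proof.
move=> i j; rewrite !mxE; case: eqP => _; first by rewrite mulr1n size_XsubC.
by rewrite mulr0n sub0r size_polyN size_polyC; case: (_ != 0).
Qed.

(* char_poly A *: q = C adj('X - A) B h, and the adjugate has degree below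
   n = deg (char_poly A). *)
Lemma ss_transfer_proper p n m (C : 'M[F]_(p, n)) (A : 'M[F]_n) (B : 'M[F]_(n, m))
  (h : 'cV[P]_m) (q : 'cV[P]_p) :
  ss_transfer C A B *m pmx h = pmx q -> (vdeg q <= vdeg h)%N.
Proof.
move=> Wh; set X := char_poly_mx A.
have pmxX : lam F *: 1%:M - cmx A = pmx X.
  by rewrite scalemx1 /pmx map_mxB /= map_scalar_mx.
have uX : pmx X \in unitmx.
  by rewrite unitmxE det_map_mx unitfE tofrac_eq0 (monic_neq0 (char_poly_monic A)).
have adjX : pmx (\adj X) = tofrac (char_poly A) *: invmx (pmx X).
  by rewrite /pmx map_mx_adj -det_map_mx -mul_scalar_mx -mul_adj_mx -mulmxA mulmxV // mulmx1.
have charq : cpmx C *m \adj X *m cpmx B *m h = char_poly A *: q.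
  apply: pmx_inj; rewrite !pmxM adjX -scalemxAr -!scalemxAl [pmx (_ *: q)]map_mxZ.
  by congr (_ *: _); rewrite -[RHS]/(pmx q) -Wh /ss_transfer pmxX.
have le_adj : mxdeg_le (cpmx C *m \adj X *m cpmx B *m h) (0 + n.-1 + 0 + vdeg h).
  apply: mxdeg_leM (mxdeg_le_vdeg h); apply: mxdeg_leM (mxdeg_le_cpmx B).
  exact: mxdeg_leM (mxdeg_le_cpmx C) (adj_deg_le (char_poly_mx_deg_le1 A)).
apply/vdeg_leP => i j; have [-> | nz_q] := eqVneq (q i j) 0; first by rewrite size_poly0.
move: (le_adj i j); rewrite charq mxE size_mul ?(monic_neq0 (char_poly_monic A)) //.
by rewrite size_char_poly; move: (size _) (vdeg h) => s e; lia.
Qed.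

Lemma ss_transfer_tr p n m (C : 'M[F]_(p, n)) (A : 'M[F]_n) (B : 'M[F]_(n, m)) :
  (ss_transfer C A B)^T = ss_transfer B^T A^T C^T.
Proof.
have trX : (lam F *: 1%:M - cmx A)^T = lam F *: 1%:M - (cmx A)^T.
  by apply/matrixP => i j; rewrite !mxE eq_sym.
by rewrite /ss_transfer !trmx_mul trmx_inv !cmxT mulmxA trX.
Qed.

End StateSpaceTransfer.

Section MinimalBasisTransfer.
Variables (F : fieldType) (m n d : nat).
Local Notation P := {poly F}.
Variables (S : 'cV[RF F]_m -> Prop) (Sh : 'cV[RF F]_n -> Prop).
Variables (X : 'M[P]_(n, m)) (Y : 'M[P]_(m, n)).
Hypothesis YX : Y *m X = 1%:M.
Hypothesis ShX : forall z, Sh (pmx X *m z) <-> S z.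
Hypothesis XY_Sh : forall x, Sh x -> x = pmx X *m (pmx Y *m x).
Hypothesis vdegX :
  forall h : 'cV[P]_m, S (pmx h) -> h != 0 -> vdeg (X *m h) = (vdeg h + d)%N.

Lemma poly_basis_of_mulX l (H : 'M[P]_(m, l)) :
  poly_basis_of S H -> poly_basis_of Sh (X *m H).
Proof.
move=> [rkH memH spanH]; split.
- have := mxrankM_maxr (pmx Y) (pmx (X *m H)).
  by rewrite -pmxM mulmxA YX mul1mx rkH => le_l; apply/eqP; rewrite eqn_leq rank_leq_col.
- by move=> j; rewrite pmxM colM; apply/ShX/memH.
- move=> x Shx; have /spanH[c Yx] : S (pmx Y *m x) by apply/ShX; rewrite -XY_Sh.
  by exists c; rewrite (XY_Sh Shx) Yx pmxM mulmxA.
Qed.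

Lemma poly_basis_of_mulY l (Hh : 'M[P]_(n, l)) :
  poly_basis_of Sh Hh -> poly_basis_of S (Y *m Hh) /\ Hh = X *m (Y *m Hh).
Proof.
move=> [rkHh memHh spanHh].
have eqHh : Hh = X *m (Y *m Hh).
  by apply/pmx_inj/col_matrixP => j; rewrite !pmxM !colM -XY_Sh.
split=> //; split.
- have := mxrankM_maxr (pmx X) (pmx (Y *m Hh)).
  by rewrite -pmxM -eqHh rkHh => le_l; apply/eqP; rewrite eqn_leq rank_leq_col.
- by move=> j; rewrite pmxM colM; apply/ShX; rewrite -XY_Sh.
- move=> x /ShX/spanHh[c Xx]; exists c.
  by rewrite -[x]mul1mx -pmx1 -YX pmxM -mulmxA Xx mulmxA -pmxM.
Qed.

Lemma tdeg_mulX l (H : 'M[P]_(m, l)) :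
  poly_basis_of S H -> tdeg (X *m H) = (tdeg H + l * d)%N.
Proof.
move=> basisH; have [_ memH _] := basisH.
rewrite /tdeg -[in (l * d)%N](card_ord l) -sum_nat_const -big_split /=.
apply: eq_bigr => j _; have Sj : S (pmx (col j H)) by rewrite -col_pmx.
by rewrite !cdeg_col colM vdegX // (poly_basis_col_neq0 j basisH).
Qed.

Lemma minimal_basis_of_mulY l (Hh : 'M[P]_(n, l)) :
  minimal_basis_of Sh Hh -> minimal_basis_of S (Y *m Hh) /\ Hh = X *m (Y *m Hh).
Proof.
move=> [basisHh minHh]; have [basisH eqHh] := poly_basis_of_mulY basisHh.
split=> //; split=> // l' H' basisH'.
have := minHh _ _ (poly_basis_of_mulX basisH'); rewrite {1}eqHh !tdeg_mulX //.
have -> : (l' * d = l * d)%N by rewrite (poly_basis_of_size basisH basisH').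
by rewrite leq_add2r.
Qed.

End MinimalBasisTransfer.

Section Linearization.
Variables (F : fieldType) (p m mh ph : nat).
Local Notation P := {poly F}.
Variables (G W : 'M[RF F]_(p, m)).
Variables (K1 : 'M[P]_(mh, m + mh)) (K2 : 'M[P]_(ph, p + ph)).
Variables (N1 : 'M[P]_(m, m + mh)) (N2 : 'M[P]_(p, p + ph)).
Variables (M : 'M[P]_(p + ph, m + mh)).
Variables (K1h : 'M[F]_(m, m + mh)) (K2h : 'M[F]_(p, p + ph)).
Variables (N1h : 'M[P]_(mh, m + mh)) (N2h : 'M[P]_(ph, p + ph)).
Hypothesis G_def : G = pmx (N2 *m M *m N1^T) + W.
Hypothesis W_proper :
  forall (h : 'cV[P]_m) (q : 'cV[P]_p), W *m pmx h = pmx q -> (vdeg q <= vdeg h)%N.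
Hypotheses (mN1 : minimal_basis N1) (degN1 : forall i j, rdeg N1 i = rdeg N1 j).
Hypotheses (mK2 : minimal_basis K2) (degK2 : forall i, rdeg K2 i = 1%N).
Hypothesis degM : forall i j, (size (M i j) <= 2)%N.
Hypothesis KN1 : col_mx K1 (cpmx K1h) *m row_mx N1h^T N1^T = 1%:M.
Hypothesis NK1 : row_mx N1h^T N1^T *m col_mx K1 (cpmx K1h) = 1%:M.
Hypothesis KN2 : col_mx K2 (cpmx K2h) *m row_mx N2h^T N2^T = 1%:M.
Hypothesis NK2 : row_mx N2h^T N2^T *m col_mx K2 (cpmx K2h) = 1%:M.

Let Ghat := block_mx (pmx M + cmx K2h^T *m W *m cmx K1h) (pmx K2^T) (pmx K1) 0.
Let X : 'M[P]_(m + mh + ph, m) := col_mx N1^T (- (N2h *m M *m N1^T)).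
Let Y : 'M[P]_(m, m + mh + ph) := row_mx (cpmx K1h) 0.

Lemma K2_N2h_mul k (v : 'M[P]_(p + ph, k)) :
  K2^T *m (N2h *m v) = v - (cpmx K2h)^T *m (N2 *m v).
Proof.
have : K2^T *m N2h + (cpmx K2h)^T *m N2 = 1%:M.
  by rewrite -[N2h]trmxK -[N2]trmxK -!trmx_mul -linearD /= -mul_row_col NK2 trmx1.
by move/(canRL (addrK _)) => K2N2h; rewrite mulmxA K2N2h mulmxBl mul1mx mulmxA.
Qed.

Lemma Ghat_mulX : Ghat *m pmx X = col_mx (cmx K2h^T *m G) 0.
Proof.
have [_ K1N1 _ K1hN1] := col_row_mx_eq1 KN1.
rewrite /Ghat /X pmx_col_mx mul_block_col mul0mx addr0 -[pmx K1 *m _]pmxM K1N1 pmx0.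
congr col_mx; rewrite G_def mulmxDl -mulmxA -[cmx K1h *m _]pmxM K1hN1 pmx1 mulmx1 addrAC.
rewrite mulmxDr; congr (_ + _); rewrite -!pmxM -pmxD; congr pmx; rewrite cpmxT.
by rewrite mulmxN -!mulmxA K2_N2h_mul opprB addrC subrK.
Qed.

Lemma Ghat_mulX_eq0 (z : 'cV[RF F]_m) : Ghat *m (pmx X *m z) = 0 <-> G *m z = 0.
Proof.
have [_ _ _ K2hN2] := col_row_mx_eq1 KN2.
have N2K2h : pmx N2 *m cmx K2h^T = 1%:M.
  by rewrite /cmx cpmxT -pmxM -[N2]trmxK -trmx_mul K2hN2 trmx1 pmx1.
rewrite mulmxA Ghat_mulX mul_col_mx mul0mx; split=> [|Gz]; last first.
  by rewrite -mulmxA Gz mulmx0 col_mx0.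
move/eqP; rewrite col_mx_eq0 eqxx andbT => /eqP K2hGz.
by rewrite -[G *m z]mul1mx -N2K2h -mulmxA (mulmxA (cmx K2h^T)) K2hGz mulmx0.
Qed.

Lemma Ghat_kernel (x : 'cV[RF F]_(m + mh + ph)) :
  Ghat *m x = 0 -> x = pmx X *m (pmx Y *m x).
Proof.
have [_ _ _ K1hN1] := col_row_mx_eq1 KN1.
have [K2N2h _ K2hN2h _] := col_row_mx_eq1 KN2.
rewrite -[x]vsubmxK; set xu := usubmx x; set xd := dsubmx x.
rewrite /Ghat mul_block_col mul0mx addr0 => /eqP; rewrite col_mx_eq0.
case/andP => /eqP top /eqP K1xu.
rewrite /Y /X pmx_row_mx pmx0 mul_row_col mul0mx addr0 pmx_col_mx mul_col_mx.
have xu_eq : xu = pmx N1^T *m (cmx K1h *m xu).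
  have : pmx N1h^T *m pmx K1 + pmx N1^T *m cmx K1h = 1%:M.
    by rewrite -!pmxM -pmxD -mul_row_col NK1 pmx1.
  by move/(congr1 (mulmx^~ xu)); rewrite mul1mx mulmxDl -!mulmxA K1xu mulmx0 add0r.
congr col_mx => //.
have N2hK2 : pmx N2h *m pmx K2^T = 1%:M.
  by rewrite -pmxM -[N2h]trmxK -trmx_mul K2N2h trmx1 pmx1.
have N2hK2h : pmx N2h *m cmx K2h^T = 0.
  by rewrite /cmx cpmxT -pmxM -[N2h]trmxK -trmx_mul K2hN2h trmx0 pmx0.
rewrite -[xd]mul1mx -N2hK2 -mulmxA.
move/eqP: top; rewrite addrC addr_eq0 => /eqP ->.
rewrite mulmxN mulmxDl mulmxDr !mulmxA N2hK2h !mul0mx addr0.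
by rewrite {1}xu_eq pmxN !pmxM !mulNmx !mulmxA.
Qed.

Lemma mulYX : Y *m X = 1%:M.
Proof. by have [_ _ _ K1hN1] := col_row_mx_eq1 KN1; rewrite mul_row_col mul0mx addr0. Qed.

Lemma vdeg_mulX_ge (h : 'cV[P]_m) : h != 0 -> (vdeg h + mdeg N1 <= vdeg (X *m h))%N.
Proof.
move=> nz_h; rewrite mul_col_mx vdeg_col_mx leq_max.
by rewrite (vdeg_minimal_basis_mul mN1 _ nz_h) // => i; apply: rdeg_eq_mdeg.
Qed.

(* With z := N1^T h, the lower block y of X h satisfies K2^T y = - M z - K2h^T (W h),
   where W h is polynomial of degree at most deg h; since K2 is a minimal basis with row
   degrees 1, this bounds deg y by deg z. *)
Lemma vdeg_mulX_le (h : 'cV[P]_m) :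
  G *m pmx h = 0 -> (vdeg (X *m h) <= vdeg h + mdeg N1)%N.
Proof.
move=> Gh; set z := N1^T *m h; set y := - (N2h *m (M *m z)); set q := - (N2 *m (M *m z)).
have leN1 : mxdeg_le N1^T (mdeg N1).
  by apply/mxdeg_le_tr/mxdeg_le_rdeg => i; rewrite (rdeg_eq_mdeg i degN1).
have le_z : mxdeg_le z (mdeg N1 + vdeg h) := mxdeg_leM leN1 (mxdeg_le_vdeg h).
have Wh : W *m pmx h = pmx q.
  move/eqP: Gh; rewrite G_def mulmxDl addrC addr_eq0 => /eqP ->.
  by rewrite /q /z -pmxM pmxN !mulmxA.
have K2y : K2^T *m y = - (M *m z) - (cpmx K2h)^T *m q.
  by rewrite mulmxN K2_N2h_mul /q mulmxN opprB addrC opprK.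
have Xh : X *m h = col_mx z y by rewrite /X mul_col_mx mulNmx -!mulmxA.
rewrite Xh vdeg_col_mx geq_max; apply/andP; split.
  by apply/vdeg_leP; rewrite [(vdeg h + _)%N]addnC.
have [-> | nz_y] := eqVneq y 0; first by rewrite vdeg0.
have := vdeg_minimal_basis_mul mK2 degK2 nz_y.
have le_q : mxdeg_le ((cpmx K2h)^T *m q) (vdeg h).
  apply: mxdeg_le_widen (W_proper Wh) _.
  exact: mxdeg_leM (mxdeg_le_tr (mxdeg_le_cpmx K2h)) (mxdeg_le_vdeg q).
have : (vdeg (K2^T *m y) <= 1 + (mdeg N1 + vdeg h))%N.
  rewrite K2y; apply/vdeg_leP/mxdeg_leD; first exact/mxdeg_leN/mxdeg_leM.
  by apply/mxdeg_leN/(mxdeg_le_widen _ le_q); lia.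
lia.
Qed.

Lemma vdeg_mulX (h : 'cV[P]_m) :
  G *m pmx h = 0 -> h != 0 -> vdeg (X *m h) = (vdeg h + mdeg N1)%N.
Proof. by move=> Gh nz_h; apply/anti_leq; rewrite vdeg_mulX_le // vdeg_mulX_ge. Qed.

Lemma right_minimal_basis_linearization l (Hh : 'M[P]_(m + mh + ph, l)) :
  right_minimal_basis Ghat Hh ->
  exists H : 'M[P]_(m, l),
    right_minimal_basis G H /\ Hh = col_mx (N1^T *m H) (- (N2h *m M *m N1^T *m H)).
Proof.
case/(@minimal_basis_of_mulY _ _ _ _ (rnull G) (rnull Ghat) X Y
  mulYX Ghat_mulX_eq0 Ghat_kernel vdeg_mulX) => minH eqHh.
by exists (Y *m Hh); split=> //; rewrite {1}eqHh /X mul_col_mx mulNmx !mulmxA.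
Qed.

End Linearization.

Theorem lemma6p3 (F : fieldType) (p m n mh ph : nat)
  (G : 'M[RF F]_(p, m))
  (D : 'M[{poly F}]_(p, m)) (A : 'M[F]_n) (B : 'M[F]_(n, m)) (C : 'M[F]_(p, n))
  (K1 : 'M[{poly F}]_(mh, m + mh)) (K2 : 'M[{poly F}]_(ph, p + ph))
  (N1 : 'M[{poly F}]_(m, m + mh)) (N2 : 'M[{poly F}]_(p, p + ph))
  (M : 'M[{poly F}]_(p + ph, m + mh))
  (K1h : 'M[F]_(m, m + mh)) (K2h : 'M[F]_(p, p + ph))
  (N1h : 'M[{poly F}]_(mh, m + mh)) (N2h : 'M[{poly F}]_(ph, p + ph))
  (T S : 'M[F]_n) :
  (* G = D + C (lambda I - A)^{-1} B, D polynomial part, minimal realization *)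
  G = pmx D + ss_transfer C A B ->
  minimal_realization C A B ->
  (1 < mdeg D)%N ->
  (* K1, K2 minimal bases with all row degrees 1 *)
  minimal_basis K1 -> minimal_basis K2 ->
  (forall i, rdeg K1 i = 1%N) -> (forall i, rdeg K2 i = 1%N) ->
  (* N1, N2 minimal bases dual to K1, K2, each with all row degrees equal *)
  dual_minimal_bases K1 N1 -> dual_minimal_bases K2 N2 ->
  (forall i j, rdeg N1 i = rdeg N1 j) -> (forall i j, rdeg N2 i = rdeg N2 j) ->
  (* M is a pencil with D = N2 M N1^T and deg D = deg N1 + deg N2 + 1 *)
  (forall i j, (size (M i j) <= 2)%N) ->
  D = N2 *m M *m N1^T ->
  mdeg D = (mdeg N1 + mdeg N2 + 1)%N ->
  (* [K_i; Kh_i] unimodular with inverse [Nh_i^T N_i^T] *)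
  col_mx K1 (cpmx K1h) *m row_mx N1h^T N1^T = 1%:M ->
  row_mx N1h^T N1^T *m col_mx K1 (cpmx K1h) = 1%:M ->
  col_mx K2 (cpmx K2h) *m row_mx N2h^T N2^T = 1%:M ->
  row_mx N2h^T N2^T *m col_mx K2 (cpmx K2h) = 1%:M ->
  (* T, S nonsingular (they define L but do not enter the transfer matrix) *)
  T \in unitmx -> S \in unitmx ->
  let Ghat : 'M[RF F]_(p + ph + mh, m + mh + ph) :=
    block_mx (pmx M + cmx K2h^T *m ss_transfer C A B *m cmx K1h) (pmx K2^T)
             (pmx K1) 0 in
  (forall l (Hh : 'M[{poly F}]_(m + mh + ph, l)),
     right_minimal_basis Ghat Hh ->
     exists H : 'M[{poly F}]_(m, l),
       right_minimal_basis G H /\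
       Hh = col_mx (N1^T *m H) (- (N2h *m M *m N1^T *m H)))
  /\
  (forall q (Jh : 'M[{poly F}]_(p + ph + mh, q)),
     left_minimal_basis Ghat Jh ->
     exists J : 'M[{poly F}]_(p, q),
       left_minimal_basis G J /\
       Jh = col_mx (N2^T *m J) (- (N1h *m M^T *m N2^T *m J))).
Proof.
move=> G_def _ _ mK1 mK2 degK1 degK2 [_ mN1 _ _] [_ mN2 _ _] degN1 degN2 degM D_def _
  KN1 NK1 KN2 NK2 _ _ Ghat.
split=> [l Hh | q Jh].
  have GW_def : G = pmx (N2 *m M *m N1^T) + ss_transfer C A B by rewrite G_def D_def.
  exact: (right_minimal_basis_linearization GW_def (@ss_transfer_proper _ _ _ _ C A B)
    mN1 degN1 mK2 degK2 degM KN1 NK1 KN2 NK2).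
(* Transposition swaps the roles of (K1, N1) and (K2, N2). *)
have GT_def : G^T = pmx (N1 *m M^T *m N2^T) + ss_transfer B^T A^T C^T.
  by rewrite G_def D_def linearD /= -ss_transfer_tr -!pmxT !trmx_mul trmxK mulmxA.
have GhatT : Ghat^T = block_mx (pmx M^T + cmx K1h^T *m ss_transfer B^T A^T C^T *m cmx K2h)
                               (pmx K1^T) (pmx K2) 0.
  rewrite /Ghat -ss_transfer_tr; move: (ss_transfer C A B) => W.
  by rewrite tr_block_mx trmx0 linearD /= !trmx_mul -!cmxT -!pmxT !trmxK !mulmxA.
move/(minimal_basis_of_ext (lnull_rnull Ghat)); rewrite GhatT.
case/(right_minimal_basis_linearization GT_def (@ss_transfer_proper _ _ _ _ B^T A^T C^T)
  mN2 degN2 mK1 degK1 _ KN2 NK2 KN1 NK1) => [i j | J [minJ ->]]; first by rewrite mxE.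
by exists J; split=> //; apply: minimal_basis_of_ext minJ => x; rewrite lnull_rnull.
Qed.
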